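(* For integers $k,l\ge 0$ define \[A(k,l)=\{(x_1,\dots,x_k)\in\mathbb{Z}^k:1\le x_1<\cdots<x_k,\ x_1+\cdots+x_k=l\},\] \[B(k,l)=\{(x_1,\dots,x_k)\in\mathbb{Z}^k:0\le x_1<\cdots<x_k,\ x_1+\cdots+x_k=l\}.\] Then for every integer $n\ge0$, \[p(n)=\sum_{0\le k\le l\le n}|A(k,l)|\,|B(k,n-l)|=\sum_{0\le k\le l\le n}|B(k,l-k)|\,|B(k,n-l)|,\] where $p(n)$ is the number of partitions of $n$.
   Context: For $k=0$ the sets $A(0,l)$ and $B(0,l)$ consist of the empty tuple if $l=0$ and are empty otherwise. $p(0)=1$. *)

From mathcomp Require Import all_boot.
Set Implicit Arguments. Unset Strict Implicit. Unset Printing Implicit Defensive.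

Definition inA (k l : nat) (s : seq nat) : bool :=
  [&& size s == k, sorted ltn s, all (fun x => 0 < x) s & sumn s == l].
Definition inB (k l : nat) (s : seq nat) : bool :=
  [&& size s == k, sorted ltn s & sumn s == l].

(* Every element of A(k,l) or B(k,l) is a nonnegative integer <= l (entries are
   >= 0 and sum to l), so these sets are exactly enumerated by k-tuples with
   entries in 'I_(l.+1). *)
Definition cardA (k l : nat) : nat := #|[set t : k.-tuple 'I_l.+1 | inA k l (map val t)]|.
Definition cardB (k l : nat) : nat := #|[set t : k.-tuple 'I_l.+1 | inB k l (map val t)]|.

Definition is_partition (n : nat) (s : seq nat) : bool :=
  [&& sorted geq s, all (fun x => 0 < x) s & sumn s == n].

(* p(n): a partition of n has at most n parts, each <= n; count partitions with
   k parts for each k <= n. *)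
Definition npart (n : nat) : nat :=
  \sum_(k < n.+1) #|[set t : k.-tuple 'I_n.+1 | is_partition n (map val t)]|.

From mathcomp Require Import all_boot zify.
Set Implicit Arguments. Unset Strict Implicit. Unset Printing Implicit Defensive.

(* Peel a partition of n into hooks: the first hook consists of the first row,
   of length x_1 >= 1, and the rest of the first column, of length y_1 >= 0;
   removing it leaves a partition whose first row is shorter and which has
   fewer parts, so iterating gives x_1 > x_2 > ... > x_k >= 1 and
   y_1 > ... > y_k >= 0 with sum x + sum y = n.  Conversely any such pair of
   sequences glues back to a unique partition.  Sorted increasingly, (x, y)
   ranges over the union of A(k,l) x B(k,n-l), which gives the first identity;
   the second follows from the bijection x |-> x - 1 from A(k,l) onto
   B(k,l-k). *)

Lemma count_bij (T1 T2 : eqType) (P1 : pred T1) (P2 : pred T2) (s1 : seq T1) (s2 : seq T2)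
    (f : T1 -> T2) (g : T2 -> T1) :
  uniq s1 -> uniq s2 -> (forall x, P1 x -> x \in s1) -> (forall y, P2 y -> y \in s2) ->
  (forall x, P1 x -> P2 (f x) /\ g (f x) = x) -> (forall y, P2 y -> P1 (g y) /\ f (g y) = y) ->
  count P1 s1 = count P2 s2.
Proof.
move=> u1 u2 c1 c2 fK gK.
rewrite -!size_filter -(size_map f); apply/perm_size/uniq_perm.
- rewrite map_inj_in_uniq ?filter_uniq // => x y.
  rewrite !mem_filter => /andP[Px _] /andP[Py _] fxy.
  by rewrite -(fK x Px).2 fxy (fK y Py).2.
- by rewrite filter_uniq.
move=> y; apply/mapP/idP => [[x] | ].
  by rewrite !mem_filter => /andP[Px _] ->; rewrite (fK x Px).1 c2 ?(fK x Px).1.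
rewrite mem_filter => /andP[Py _]; exists (g y); last by rewrite (gK y Py).2.
by rewrite mem_filter (gK y Py).1 c1 ?(gK y Py).1.
Qed.

Lemma count_split (T : Type) m (f : T -> nat) (P : pred T) (s : seq T) :
  (forall x, P x -> f x < m) ->
  count P s = \sum_(k < m) count (fun x => P x && (f x == k)) s.
Proof.
move=> Pf; elim: s => [|x s IH] /=; first by rewrite big1.
rewrite big_split /= -IH; congr (_ + _).
case Px: (P x) => /=; last by rewrite big1.
rewrite (eq_bigr (fun k : 'I_m => if k == f x :> nat then 1 else 0)) => [|k _]; last first.
  by rewrite eq_sym; case: eqP.
by rewrite -big_mkcond (big_ord1_eq _ (fun=> 1)) Pf.
Qed.

Lemma count_allpairs (T1 T2 : Type) (P1 : pred T1) (P2 : pred T2) s1 s2 :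
  count (fun p => P1 p.1 && P2 p.2) [seq (x, y) | x <- s1, y <- s2]
  = count P1 s1 * count P2 s2.
Proof.
elim: s1 => [|x s1 IH] //=; rewrite count_cat IH count_map mulnDl; congr (_ + _).
rewrite (@eq_count _ _ (fun y => P1 x && P2 y)) //.
by case: (P1 x); rewrite ?mul1n // mul0n; apply: count_pred0.
Qed.

Definition tuple_seqs k b : seq (seq nat) :=
  [seq map val (val t) | t : k.-tuple 'I_b <- enum {: k.-tuple 'I_b}].

Lemma mem_tuple_seqs k b s :
  (s \in tuple_seqs k b) = (size s == k) && all (fun x => x < b) s.
Proof.
apply/mapP/andP => [[t _ ->] | [/eqP sk sb]].
  rewrite size_map size_tuple; split=> //; apply/allP => x /mapP[i _ ->]; by case: i.
have sz : size (pmap insub s : seq 'I_b) == k by rewrite size_pmap_sub -sk -all_count.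
exists (Tuple sz); first by rewrite mem_enum.
rewrite /= (pmap_filter (insubK _)); apply/esym/all_filterP.
by apply: sub_all sb => x xb; rewrite insubT.
Qed.

Lemma uniq_tuple_seqs k b : uniq (tuple_seqs k b).
Proof.
by rewrite map_inj_uniq ?enum_uniq // => t1 t2 /(inj_map val_inj) /val_inj.
Qed.

Lemma card_tuple_set k b (P : pred (seq nat)) (s : seq (seq nat)) : uniq s ->
  (forall x, P x -> size x = k -> all (fun y => y < b) x /\ x \in s) ->
  #|[set t : k.-tuple 'I_b | P (map val t)]| = count (fun x => P x && (size x == k)) s.
Proof.
move=> us Ps; rewrite cardsE cardE /enum_mem -enumT size_filter.
rewrite -(count_map (fun t : k.-tuple 'I_b => map val (val t)) P) -/(tuple_seqs k b).
rewrite (@eq_in_count _ _ (fun x => P x && (size x == k))) => [|x]; last first.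
  by rewrite mem_tuple_seqs => /andP[/eqP -> _]; rewrite eqxx andbT.
apply: (@count_bij _ _ _ _ _ _ id id) => //; first exact: uniq_tuple_seqs.
- by move=> x /andP[Px /eqP xk]; rewrite mem_tuple_seqs xk eqxx (Ps x Px xk).1.
- by move=> x /andP[Px /eqP xk]; apply: (Ps x Px xk).2.
Qed.

Lemma mem_leq_sumn (s : seq nat) x : x \in s -> x <= sumn s.
Proof.
elim: s => [|y s IH] //=; rewrite inE => /orP[/eqP -> | /IH]; first exact: leq_addr.
by move/leq_trans; apply; apply: leq_addl.
Qed.

Lemma size_leq_sumn (s : seq nat) : all (fun x => 0 < x) s -> size s <= sumn s.
Proof. by elim: s => //= x s IH /andP[x0 /IH]; rewrite -add1n; apply: leq_add. Qed.

Lemma sumn_map_succ (s : seq nat) : sumn (map succn s) = sumn s + size s.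
Proof. by elim: s => //= x s ->; rewrite addnS addSn addnA. Qed.

(* A common finite universe: every element of A(k,l) or B(k,l) with k, l <= n,
   and every partition of n, has at most n entries, all at most n. *)
Definition small_seqs n : seq (seq nat) :=
  undup (flatten [seq tuple_seqs k n.+1 | k <- iota 0 n.+1]).

Lemma uniq_small_seqs n : uniq (small_seqs n).
Proof. exact: undup_uniq. Qed.

Lemma mem_small_seqs n s : size s <= n -> sumn s <= n -> s \in small_seqs n.
Proof.
move=> sn Sn; rewrite mem_undup; apply/flattenP; exists (tuple_seqs (size s) n.+1).
  by apply/mapP; exists (size s); rewrite // mem_iota.
rewrite mem_tuple_seqs eqxx; apply/allP => x /mem_leq_sumn xS.
by rewrite ltnS (leq_trans xS).
Qed.

Lemma all_ltn_sumn (s : seq nat) : all (fun x => x < (sumn s).+1) s.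
Proof. by apply/allP => x /mem_leq_sumn. Qed.

Lemma cardA_count n k l : l <= n -> cardA k l = count (inA k l) (small_seqs n).
Proof.
move=> ln; rewrite /cardA (card_tuple_set (uniq_small_seqs n)) => [|s].
  by apply: eq_count => s; apply: andb_idr => /and4P[].
move=> /and4P[_ _ pos /eqP Sl] _; rewrite -Sl in ln *; split; first exact: all_ltn_sumn.
by rewrite mem_small_seqs // (leq_trans (size_leq_sumn pos)).
Qed.

Lemma cardB_count n k l : k <= n -> l <= n -> cardB k l = count (inB k l) (small_seqs n).
Proof.
move=> kn ln; rewrite /cardB (card_tuple_set (uniq_small_seqs n)) => [|s].
  by apply: eq_count => s; apply: andb_idr => /and3P[].
move=> /and3P[_ _ /eqP Sl] sk; rewrite -Sl in ln *; split; first exact: all_ltn_sumn.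
by rewrite mem_small_seqs ?sk.
Qed.

Lemma npart_count n : npart n = count (is_partition n) (small_seqs n).
Proof.
rewrite (@count_split _ n.+1 size) => [|s /and3P[_ pos /eqP <-]]; last first.
  by rewrite ltnS size_leq_sumn.
apply: eq_bigr => k _; rewrite (card_tuple_set (uniq_small_seqs n)) // => s.
move=> /and3P[_ pos /eqP Sn] _; rewrite -{1}Sn; split; first exact: all_ltn_sumn.
by rewrite mem_small_seqs ?Sn // -{1}Sn size_leq_sumn.
Qed.

Lemma sorted_path_head (e : rel nat) x s :
  sorted e s -> (s != [::] -> e x (head 0 s)) -> path e x s.
Proof. by case: s => //= y s -> /(_ isT) ->. Qed.

Definition is_part (s : seq nat) := sorted geq s && all (fun x => 0 < x) s.

(* The Young diagram of s with a column of height m (at least size s) added on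
   the left. *)
Definition add_col m (s : seq nat) := map succn (s ++ nseq (m - size s) 0).

Definition drop_col (s : seq nat) := [seq x.-1 | x <- s & 1 < x].

Section AddCol.
Variables (m : nat) (s : seq nat).
Hypothesis sm : size s <= m.

Lemma size_add_col : size (add_col m s) = m.
Proof. by rewrite size_map size_cat size_nseq subnKC. Qed.

Lemma sumn_add_col : sumn (add_col m s) = sumn s + m.
Proof. by rewrite sumn_map_succ sumn_cat sumn_nseq size_cat size_nseq subnKC // addn0. Qed.

Lemma head_add_col : 0 < m -> head 0 (add_col m s) = (head 0 s).+1.
Proof. by case: s sm => [|x t] //= _; case: m. Qed.

End AddCol.

Lemma is_part_add_col m s : sorted geq s -> is_part (add_col m s).
Proof.
move=> ss; rewrite /is_part sorted_map all_map; apply/andP; split; last exact/allP.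
case: s ss => [_ | x t]; first by case: (m - 0) => //=; elim=> //= k ->.
rewrite /= cat_path => -> /=; case: (_ - _) => //=; elim=> //= k ->; exact: leq0n.
Qed.

Lemma add_colK m s : all (fun x => 0 < x) s -> drop_col (add_col m s) = s.
Proof.
rewrite /drop_col /add_col; move: (m - size s) => k.
elim: s => [_ | x s IH /andP[x0 /IH]] /=; first by elim: k.
by rewrite ltnS x0 /= => ->.
Qed.

Lemma size_drop_col s : size (drop_col s) <= size s.
Proof. by rewrite size_map size_filter count_size. Qed.

Lemma drop_col_ltn x s : all (fun y => y <= x) s -> all (fun y => y < x) (drop_col s).
Proof.
move=> /allP sx; rewrite all_map; apply/allP => y; rewrite mem_filter => /andP[y1 /sx].
by rewrite /= -ltnS prednK // ltnW.
Qed.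

Lemma is_part_cons x s : is_part (x :: s) -> [/\ 0 < x, is_part s & all (fun y => y <= x) s].
Proof.
rewrite /is_part /= => /andP[xs /andP[x0 ->]]; rewrite (path_sorted xs) x0.
by split=> //; apply: (order_path_min _ xs) => y z w zy wz; apply: leq_trans wz zy.
Qed.

Lemma is_part_drop_col s : is_part s -> is_part (drop_col s).
Proof.
move=> /andP[ss _]; rewrite /is_part /drop_col sorted_map all_map; apply/andP; split.
  apply: (@sub_sorted _ geq) => [x y /= | ]; first by lia.
  by apply: sorted_filter => // x y z xy zx; apply: leq_trans zx xy.
by apply/allP => x; rewrite mem_filter /= => /andP[x_gt1 _]; lia.
Qed.

Lemma drop_colK s : is_part s -> add_col (size s) (drop_col s) = s.
Proof.
rewrite /add_col /drop_col; elim: s => //= x s IH /is_part_cons[x0 ps sx].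
case: ltnP => [x_gt1 | x_le1] /=; first by rewrite subSS IH // prednK.
have s1 : all (pred1 1) s.
  case/andP: ps => _ /allP spos; apply/allP => y ys /=.
  by rewrite eqn_leq spos // (leq_trans (allP sx y ys) x_le1).
rewrite (eq_in_filter (a2 := pred0)) => [|y /(allP s1) /eqP -> //].
have -> : x = 1 by apply/eqP; rewrite eqn_leq x0 x_le1.
by rewrite filter_pred0 /= map_nseq -(all_pred1P _ _ s1).
Qed.

Definition hook_coords (a b : seq nat) :=
  [&& size a == size b, sorted gtn a, all (fun x => 0 < x) a & sorted gtn b].

Fixpoint glue_hooks (a b : seq nat) : seq nat :=
  match a, b with
  | x :: a', y :: b' => x :: add_col y (glue_hooks a' b')
  | _, _ => [::]
  end.

(* Each step removes a part, so fuel >= size s is enough. *)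
Fixpoint peel_hooks (fuel : nat) (s : seq nat) : seq nat * seq nat :=
  match fuel, s with
  | fuel'.+1, x :: s' =>
      let (a, b) := peel_hooks fuel' (drop_col s') in (x :: a, size s' :: b)
  | _, _ => ([::], [::])
  end.

Lemma hook_coords_cons x a y b :
  hook_coords (x :: a) (y :: b) =
  [&& hook_coords a b, 0 < x, path gtn x a & path gtn y b].
Proof.
rewrite /hook_coords /= eqSS; apply/and4P/and4P.
  case=> -> xa /andP[-> ->] yb.
  by rewrite xa yb (path_sorted xa) (path_sorted yb).
by case=> /and4P[-> _ -> _] -> xa yb.
Qed.

Lemma size_glue_hooks a b :
  hook_coords a b -> size (glue_hooks a b) = (if b is y :: _ then y.+1 else 0).
Proof.
elim: a b => [|x a IH] [|y b] //; rewrite hook_coords_cons => /and4P[hab _ _ yb] /=.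
by rewrite size_add_col // IH //; case: (b) yb => //= ? ? /andP[].
Qed.

Lemma size_glue_hooks_tail x a y b :
  hook_coords (x :: a) (y :: b) -> size (glue_hooks a b) <= y.
Proof.
rewrite hook_coords_cons => /and4P[hab _ _ yb].
by rewrite size_glue_hooks //; case: (b) yb => //= ? ? /andP[].
Qed.

Lemma glue_hooksP a b : hook_coords a b ->
  [/\ is_part (glue_hooks a b), sumn (glue_hooks a b) = sumn a + sumn b
    & head 0 (glue_hooks a b) = head 0 a].
Proof.
elim: a b => [|x a IH] [|y b] // hxy; have gy := size_glue_hooks_tail hxy.
move: hxy; rewrite hook_coords_cons => /and4P[hab x0 xa _].
have [gpart gsum ghead] := IH b hab; set g := glue_hooks a b in gy gpart gsum ghead *.
split=> //=.
- have /andP[cs cpos] := is_part_add_col y (proj1 (andP gpart)).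
  rewrite /is_part /= x0 cpos !andbT; apply: sorted_path_head cs _ => ne.
  have y0 : 0 < y by rewrite -(size_add_col gy) lt0n size_eq0.
  by rewrite head_add_col // ghead; case: (a) xa => //= ? ? /andP[].
- by rewrite sumn_add_col // gsum; lia.
Qed.

Lemma peel_hooksP fuel s a b : is_part s -> size s <= fuel ->
  peel_hooks fuel s = (a, b) -> hook_coords a b /\ glue_hooks a b = s.
Proof.
elim: fuel s a b => [|f IH] [|x s] a b //= => [_ _ [<- <-] | _ _ [<- <-] |] //.
move=> /is_part_cons[x0 ps sx] sf; case E: peel_hooks => [a' b'] [<- <-].
have [hab gab] := IH _ _ _ (is_part_drop_col ps) (leq_trans (size_drop_col s) sf) E.
split; last by rewrite /= gab drop_colK.
case/and4P: (hab) => _ sa _ sb.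
rewrite hook_coords_cons hab x0 /=; apply/andP; split.
- apply: sorted_path_head sa _ => _; have [_ _ <-] := glue_hooksP hab; rewrite gab.
  by case: (drop_col s) (drop_col_ltn sx) => //= ? ? /andP[].
- apply: sorted_path_head sb _; move: (size_glue_hooks hab); rewrite gab.
  by case: (b') => //= y _ sy _; rewrite -ltnS -sy ltnS size_drop_col.
Qed.

Lemma glue_hooksK fuel a b : hook_coords a b -> size (glue_hooks a b) <= fuel ->
  peel_hooks fuel (glue_hooks a b) = (a, b).
Proof.
elim: a b fuel => [|x a IH] [|y b] [|f] //= hxy; have gy := size_glue_hooks_tail hxy.
move: hxy; rewrite hook_coords_cons ltnS size_add_col // => /and4P[hab _ _ _] yf.
rewrite add_colK; last by have [/andP[]] := glue_hooksP hab.
by rewrite IH // (leq_trans gy).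
Qed.

Definition AB_pair n (p : seq nat * seq nat) :=
  [&& size p.1 == size p.2, sorted ltn p.1, all (fun x => 0 < x) p.1, sorted ltn p.2
    & sumn p.1 + sumn p.2 == n].

Definition small_pairs n := [seq (x, y) | x <- small_seqs n, y <- small_seqs n].

Lemma hook_coords_rev a b : hook_coords (rev a) (rev b) =
  [&& size a == size b, sorted ltn a, all (fun x => 0 < x) a & sorted ltn b].
Proof. by rewrite /hook_coords !size_rev !rev_sorted all_rev. Qed.

Lemma count_AB_pairs n :
  count (AB_pair n) (small_pairs n) = count (is_partition n) (small_seqs n).
Proof.
pose glue p := glue_hooks (rev p.1) (rev p.2).
pose peel s := let p := peel_hooks (size s) s in (rev p.1, rev p.2).
apply: (@count_bij _ _ _ _ _ _ glue peel); last 4 first.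
- move=> [a b] /and5P[/eqP ab _ pos _ /eqP Sn].
  have Sa : sumn a <= n by rewrite -Sn leq_addr.
  have sa : size a <= n := leq_trans (size_leq_sumn pos) Sa.
  by apply/allpairsP; exists (a, b); rewrite !mem_small_seqs -?ab // -Sn leq_addl.
- move=> s /and3P[_ pos /eqP Sn].
  by apply: mem_small_seqs; rewrite -Sn ?size_leq_sumn.
- move=> [a b] /and5P[sab sa pos sb /eqP Sn].
  have hab : hook_coords (rev a) (rev b) by rewrite hook_coords_rev sab sa pos sb.
  have [/andP[gs gpos] gsum _] := glue_hooksP hab.
  rewrite /is_partition gs gpos gsum !sumn_rev Sn eqxx /peel glue_hooksK //.
  by rewrite /= !revK.
- move=> s /and3P[ss pos /eqP Sn]; rewrite /peel.
  have ps : is_part s by apply/andP.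
  case E: peel_hooks => [a b] /=; have [hab gab] := peel_hooksP ps (leqnn _) E.
  have [_ gsum _] := glue_hooksP hab.
  rewrite /AB_pair /glue /= !revK !sumn_rev -gsum gab Sn eqxx andbT; split=> //.
  by move: hab; rewrite -{1}(revK a) -{1}(revK b) hook_coords_rev.
- by rewrite allpairs_uniq ?uniq_small_seqs // => -[? ?] [? ?] _ _ /= ->.
- exact: uniq_small_seqs.
Qed.

Lemma inA_inB_AB_pair n k l a b : l <= n ->
  inA k l a && inB k (n - l) b = [&& AB_pair n (a, b), sumn a == l & size a == k].
Proof.
move=> ln; rewrite /inA /inB /AB_pair /=.
have [<- | _] := eqVneq (size a) k; last by rewrite /= !andbF.
have [Sl | _] := eqVneq (sumn a) l; last by rewrite /= !andbF.
subst l.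
have -> : (sumn b == n - sumn a) = (sumn a + sumn b == n) by apply/eqP/eqP; lia.
rewrite (eq_sym (size b)) /= !andbT.
by case: (size a == size b) (sorted ltn a) (all _ a) (sorted ltn b) (_ == n) => [] [] [] [] [].
Qed.

Lemma sum_cardA_cardB n :
  \sum_(l < n.+1) \sum_(k < l.+1) cardA k l * cardB k (n - l)
  = count (AB_pair n) (small_pairs n).
Proof.
rewrite (@count_split _ n.+1 (fun p => sumn p.1)) => [|p /and5P[_ _ _ _ /eqP <-]]; last first.
  by rewrite ltnS leq_addr.
apply: eq_bigr => -[l /=]; rewrite ltnS => ln _.
rewrite (@count_split _ l.+1 (fun p => size p.1)) => [|p /andP[/and5P[_ _ pos _ _] /eqP <-]]; last first.
  by rewrite ltnS size_leq_sumn.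
apply: eq_bigr => -[k /=]; rewrite ltnS => kl _.
rewrite (cardA_count k ln) (@cardB_count n) ?leq_subr ?(leq_trans kl) // -count_allpairs.
by apply: eq_count => -[a b]; rewrite /= inA_inB_AB_pair // andbA.
Qed.

Lemma inA_map_succ k l s : k <= l -> inA k l (map succn s) = inB k (l - k) s.
Proof.
move=> kl; rewrite /inA /inB size_map sorted_map all_map sumn_map_succ.
have [sk | _] := eqVneq (size s) k; last by [].
subst k.
have -> : (sumn s + size s == l) = (sumn s == l - size s) by apply/eqP/eqP; lia.
by rewrite (@eq_all _ _ predT) ?all_predT.
Qed.

Lemma cardA_cardB k l : k <= l -> cardA k l = cardB k (l - k).
Proof.
move=> kl; rewrite (@cardA_count l) // (@cardB_count l) ?leq_subr //.
have predK s : inA k l s -> map succn (map predn s) = s.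
  by case/and4P=> _ _ /allP pos _; rewrite -map_comp map_id_in // => x /pos /prednK.
apply: (@count_bij _ _ _ _ _ _ (map predn) (map succn)); rewrite ?uniq_small_seqs //.
- by move=> s /and4P[/eqP sk _ _ /eqP Sl]; rewrite mem_small_seqs ?sk ?Sl.
- by move=> s /and3P[/eqP sk _ /eqP Sl]; rewrite mem_small_seqs ?sk ?Sl ?leq_subr.
- by move=> s As; rewrite -inA_map_succ // predK.
- by move=> s Bs; rewrite inA_map_succ // -map_comp map_id.
Qed.

Theorem lemma3p2 (n : nat) :
  npart n = \sum_(l < n.+1) \sum_(k < l.+1) cardA k l * cardB k (n - l)
  /\ npart n = \sum_(l < n.+1) \sum_(k < l.+1) cardB k (l - k) * cardB k (n - l).
Proof.
have partA : npart n = \sum_(l < n.+1) \sum_(k < l.+1) cardA k l * cardB k (n - l).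
  by rewrite npart_count sum_cardA_cardB count_AB_pairs.
split=> //; rewrite partA; apply: eq_bigr => l _; apply: eq_bigr => k _.
by rewrite cardA_cardB // -ltnS.
Qed.
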